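(* Let $G\in\mathcal{WR}_b(A,B\curvearrowright I)$ with quotient map $\varepsilon\colon G\to B$, section $\varsigma$ and cocycle $\alpha$, and let $C>0$ with $|\mathrm{supp}(\alpha(x,y))|\le C$ for all $x,y\in B$. Let $\pi\colon B\to\mathcal O(\ell^2(I))$ be the orthogonal (permutation) representation induced by $B\curvearrowright I$. Then there is a map $\mathfrak q\colon G\to\ell^2(I)$ such that (1) for all $x,y\in G$, $\sup_{z\in G}\|\mathfrak q(xzy)-\pi_{\varepsilon(x)}(\mathfrak q(z))\|_2<\infty$; and (2) for all $x\in A^{(I)}$, $\|\mathfrak q(x)\|_2^2=|\mathrm{supp}(x)|$.
   Context: $G\in\mathcal{WR}(A,B\curvearrowright I)$ means there is a short exact sequence $1\to A^{(I)}:=\bigoplus_{i\in I}A_i\to G\xrightarrow{\varepsilon}B\to1$ with $A_i\cong A$ and $gA_ig^{-1}=A_{\varepsilon(g)i}$ for all $g\in G,i\in I$. $G\in\mathcal{WR}_b(A,B\curvearrowright I)$ means moreover there is a map $\varsigma\colon B\to G$ with $\varepsilon\circ\varsigma=\mathrm{id}_B$ such that the cocycle $\alpha(x,y)=\varsigma(x)\varsigma(y)\varsigma(xy)^{-1}\in A^{(I)}$ has uniformly bounded support. For $c\in A^{(I)}$, $\mathrm{supp}(c)=\{i\in I: c(i)\neq1\}$. $\ell^2(I)$ is the real Hilbert space of square-summable real functions on $I$. *)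

From HB Require Import structures.
From mathcomp Require Import all_boot all_order all_algebra monoid.
From mathcomp Require Import all_classical all_reals.
From mathcomp Require Import finmap esum.

Set Implicit Arguments.
Unset Strict Implicit.
Unset Printing Implicit Defensive.

Import Order.TTheory GRing.Theory Num.Theory.
Local Open Scope classical_set_scope.

Section WreathLike.
Variables (A B G : groupType) (I : choiceType).

(* Elements of A^(I) = (+)_{i in I} A_i are represented by functions
   I -> A with finite support. *)
Definition suppA (c : I -> A) : set I := [set i | c i != 1%g].
Definition finsuppA (c : I -> A) : Prop := finite_set (suppA c).

Definition card_supp (c : I -> A) : nat := #|` fset_set (suppA c) |%N.

Definition fmulA (c d : I -> A) : I -> A := fun i => (c i * d i)%g.

Definition Acopy (i : I) : set (I -> A) := [set c | suppA c `<=` [set i]].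

Definition is_action (act : B -> I -> I) : Prop :=
  (forall i, act 1%g i = i) /\
  (forall x y i, act (x * y)%g i = act x (act y i)).

Definition is_group_hom (H K : groupType) (f : H -> K) : Prop :=
  forall x y, f (x * y)%g = (f x * f y)%g.

(* G is in WR(A, B ↷ I): short exact sequence
   1 -> A^(I) --iota--> G --eps--> B -> 1, with
   g A_i g^-1 = A_{eps(g) i}. *)
Definition is_WR (act : B -> I -> I) (eps : G -> B) (iota : (I -> A) -> G)
  : Prop :=
  is_action act /\
  [/\
      (forall c d, finsuppA c -> finsuppA d -> iota (fmulA c d) = (iota c * iota d)%g),
      (forall c d, finsuppA c -> finsuppA d -> iota c = iota d -> c = d),
      is_group_hom eps /\ (forall b, exists g, eps g = b),
      (forall g, eps g = 1%g <-> exists c, finsuppA c /\ iota c = g) &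
      (forall g i,
         [set (g * iota c * g^-1)%g | c in Acopy i]
         = [set iota d | d in Acopy (act (eps g) i)])].

Definition cocycle (sigma : B -> G) (x y : B) : G :=
  (sigma x * sigma y * (sigma (x * y)%g)^-1)%g.

End WreathLike.

Section L2.
Variables (R : realType) (I : choiceType).
Local Open Scope ring_scope.

Definition l2sq (f : I -> R) : \bar R := \esum_(i in [set: I]) ((f i) ^+ 2)%:E.
Definition in_l2 (f : I -> R) : Prop := (l2sq f < +oo)%E.
Definition l2norm (f : I -> R) : R := Num.sqrt (fine (l2sq f)).

Definition perm_rep (B : groupType) (act : B -> I -> I) (b : B) (f : I -> R)
  : I -> R := fun i => f (act (b^-1)%g i).

End L2.

From HB Require Import structures.
From mathcomp Require Import all_boot all_order all_algebra monoid.
From mathcomp Require Import all_classical all_reals.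
From mathcomp Require Import finmap esum.

(* Put [ker_part g := g * sigma (eps g)^-1 * sigma 1], an element of A^(I)
   equal to [g] when [g] is, and let [q g] be the indicator of its support;
   then [|q c|^2 = |supp c|] on A^(I). For fixed [x], [y],
   [ker_part (x z y) = ker_part x * (h ker_part z h^-1) * k] with
   [eps h = eps x] and [k] a product of conjugates of [sigma 1]^(+-1),
   [ker_part y] and two cocycle values, so [|supp k|] is bounded
   independently of [z]. Conjugation by [h] moves supports along [eps x],
   hence [q (x z y)] and [pi_(eps x) (q z)] differ only on
   [supp (ker_part x) `|` supp k], a set of bounded size. *)

Set Implicit Arguments.
Unset Strict Implicit.
Unset Printing Implicit Defensive.

Import Order.TTheory GRing.Theory Num.Theory.
Local Open Scope classical_set_scope.
Local Open Scope ring_scope.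

Section FinitelySupportedL2.
Variables (R : realType) (I : choiceType).

Lemma l2sq_finite_support (f : I -> R) (D : set I) : finite_set D ->
  (forall i, ~ D i -> f i = 0) ->
  l2sq f = (\sum_(i <- fset_set D) f i ^+ 2)%:E.
Proof.
move=> finD f0; rewrite /l2sq.
rewrite (eq_esum (b := fun i => if i \in D then ((f i) ^+ 2)%:E else 0%E)).
  rewrite -esum_mkcond esum_fset //; last by move=> i _; rewrite lee_fin sqr_ge0.
  by rewrite fsbig_finite // sumEFin.
move=> i _; case: ifPn => // /negP notDi.
by rewrite f0 ?expr0n // => Di; apply/notDi/mem_set.
Qed.

Lemma l2norm_le_sqrt_card (f : I -> R) (D : set I) : finite_set D ->
  (forall i, ~ D i -> f i = 0) -> (forall i, f i ^+ 2 <= 1) ->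
  l2norm f <= Num.sqrt #|` fset_set D|%:R.
Proof.
move=> finD f0 f_le1; rewrite /l2norm (l2sq_finite_support finD f0) /=.
rewrite ler_sqrt // card_fset_sum1 natr_sum; exact: ler_sum.
Qed.

Lemma l2_indicator (S : set I) : finite_set S ->
  in_l2 (fun i => (i \in S)%:R : R) /\
  l2norm (fun i => (i \in S)%:R : R) ^+ 2 = #|` fset_set S|%:R.
Proof.
move=> finS; have f0 i : ~ S i -> (i \in S)%:R = 0 :> R.
  by move=> notSi; rewrite memNset.
rewrite /in_l2 /l2norm (l2sq_finite_support finS f0) ltry; split=> //=.
rewrite sqr_sqrtr; last by apply: sumr_ge0 => i _; exact: sqr_ge0.
rewrite card_fset_sum1 natr_sum big_seq [RHS]big_seq; apply: eq_bigr => i.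
by rewrite in_fset_set // => ->; rewrite expr1n.
Qed.

Lemma l2norm_sub_indicator (p q : I -> bool) (D : set I) : finite_set D ->
  (forall i, ~ D i -> p i = q i) ->
  l2norm (fun i => (p i)%:R - (q i)%:R : R) <= Num.sqrt #|` fset_set D|%:R.
Proof.
move=> finD pq; apply: l2norm_le_sqrt_card finD _ _ => i.
  by move=> /pq ->; rewrite subrr.
by case: (p i); case: (q i); rewrite ?subrr ?subr0 ?sub0r ?sqrrN ?expr0n ?expr1n.
Qed.

End FinitelySupportedL2.

Section KernelCoordinates.
Variables (A B G : groupType) (I : choiceType)
  (act : B -> I -> I) (eps : G -> B) (iota : (I -> A) -> G).
Hypothesis WR : is_WR act eps iota.
Implicit Types (c d : I -> A) (g h : G).
Local Open Scope group_scope.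

Definition fone : I -> A := fun _ => 1.
Definition finv c : I -> A := fun i => (c i)^-1.

Lemma iota_fmul c d : finsuppA c -> finsuppA d -> iota (fmulA c d) = iota c * iota d.
Proof. by case: WR => _ [iotaM _ _ _ _]; apply: iotaM. Qed.

Lemma iota_inj c d : finsuppA c -> finsuppA d -> iota c = iota d -> c = d.
Proof. by case: WR => _ [_ iota_inj _ _ _]; apply: iota_inj. Qed.

Lemma epsM g h : eps (g * h) = eps g * eps h.
Proof. by case: WR => _ [_ _ [epsM _] _ _]; apply: epsM. Qed.

Lemma eps_eq1 g : eps g = 1 <-> exists c, finsuppA c /\ iota c = g.
Proof. by case: WR => _ [_ _ _ exact_mid _]; apply: exact_mid. Qed.

Lemma conj_Acopy g i : [set g * iota c * g^-1 | c in Acopy i]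
  = [set iota d | d in Acopy (act (eps g) i)].
Proof. by case: WR => _ [_ _ _ _ conjA]; apply: conjA. Qed.

Lemma act1 i : act 1 i = i.
Proof. by case: WR => -[act1 _] _; apply: act1. Qed.

Lemma actM x y i : act (x * y) i = act x (act y i).
Proof. by case: WR => -[_ actM] _; apply: actM. Qed.

Lemma actK x i : act x^-1 (act x i) = i.
Proof. by rewrite -actM mulVg act1. Qed.

Lemma actKV x i : act x (act x^-1 i) = i.
Proof. by rewrite -actM mulgV act1. Qed.

Lemma eps1 : eps 1 = 1.
Proof. by apply: (mulgI (eps 1)); rewrite -epsM !mulg1. Qed.

Lemma epsV g : eps g^-1 = (eps g)^-1.
Proof. by apply: (mulgI (eps g)); rewrite -epsM !mulgV eps1. Qed.

Lemma memsuppA c i : (i \in suppA c) = (c i != 1).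
Proof. by apply/idP/idP => [/set_mem|/mem_set]. Qed.

Lemma finsuppA_fone : finsuppA fone.
Proof.
apply: (@sub_finite_set _ _ set0); last exact: finite_set0.
by move=> i; rewrite /suppA /fone /= eqxx.
Qed.

Lemma suppA_finv c : suppA (finv c) = suppA c.
Proof. by apply/seteqP; split => i; rewrite /suppA /finv /= invg_eq1. Qed.

Lemma finsuppA_finv c : finsuppA c -> finsuppA (finv c).
Proof. by rewrite /finsuppA suppA_finv. Qed.

Lemma suppA_fmul c d : suppA (fmulA c d) `<=` suppA c `|` suppA d.
Proof.
move=> i; rewrite /suppA /fmulA /=.
by case: (eqVneq (c i) 1) => [->|]; [rewrite mul1g; right | left].
Qed.

Lemma finsuppA_fmul c d : finsuppA c -> finsuppA d -> finsuppA (fmulA c d).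
Proof.
move=> fc fd; rewrite /finsuppA; apply: (sub_finite_set (@suppA_fmul c d)).
by rewrite finite_setU.
Qed.

Lemma iota_fone : iota fone = 1.
Proof.
have fone_fmul : fmulA fone fone = fone by apply: funext => i; rewrite /fmulA mulg1.
apply: (mulgI (iota fone)); rewrite mulg1 -iota_fmul ?fone_fmul //; exact: finsuppA_fone.
Qed.

Lemma iota_eq1 c : finsuppA c -> iota c = 1 <-> c = fone.
Proof.
move=> fc; split=> [|->]; last exact: iota_fone.
by rewrite -iota_fone; apply: iota_inj fc finsuppA_fone.
Qed.

Lemma iota_finv c : finsuppA c -> iota (finv c) = (iota c)^-1.
Proof.
move=> fc; apply: (mulgI (iota c)); rewrite mulgV -iota_fmul //; last exact: finsuppA_finv.
by rewrite -iota_fone; congr iota; apply: funext => i; rewrite /fmulA /finv mulgV.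
Qed.

Lemma card_supp_fmul c d : finsuppA c -> finsuppA d ->
  (card_supp (fmulA c d) <= card_supp c + card_supp d)%N.
Proof.
move=> fc fd; rewrite /card_supp.
have sub : (fset_set (suppA (fmulA c d)) `<=` fset_set (suppA c `|` suppA d))%fset.
  by rewrite -fset_set_sub ?finite_setU //; [exact: suppA_fmul | exact: finsuppA_fmul].
apply: leq_trans (fsubset_leq_card sub) _.
by rewrite fset_setU //; exact: (leq_card_fsetU _ _).1.
Qed.

Lemma card_supp_finv c : card_supp (finv c) = card_supp c.
Proof. by rewrite /card_supp suppA_finv. Qed.

Definition supp_transport (b : B) c d := forall i, (d i != 1) = (c (act b^-1 i) != 1).

Lemma card_supp_transport b c d : finsuppA c -> supp_transport b c d ->
  card_supp d = card_supp c.
Proof.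
move=> fc bcd; rewrite /card_supp; have -> : suppA d = act b @` suppA c.
  apply/seteqP; split => i; rewrite /suppA /=.
    by rewrite bcd => ci; exists (act b^-1 i) => //; exact: actKV.
  by case=> k ck <-; rewrite bcd actK.
rewrite fset_set_image // card_imfset //.
by move=> i j /(congr1 (act b^-1)); rewrite !actK.
Qed.

Lemma supp_transport_fmul b c1 c2 d1 d2 :
  (forall i, c1 i = 1 \/ c2 i = 1) ->
  supp_transport b c1 d1 -> supp_transport b c2 d2 ->
  supp_transport b (fmulA c1 c2) (fmulA d1 d2).
Proof.
move=> disj bcd1 bcd2 i; rewrite /fmulA.
have trivial_at (c d : I -> A) : supp_transport b c d -> c (act b^-1 i) = 1 -> d i = 1.
  by move=> bcd c_1; apply/eqP/negbFE; rewrite bcd c_1 eqxx.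
case: (disj (act b^-1 i)) => c_1.
  by rewrite c_1 (trivial_at _ _ bcd1 c_1) !mul1g.
by rewrite c_1 (trivial_at _ _ bcd2 c_1) !mulg1.
Qed.

Lemma Acopy_fone c j : Acopy j c -> c = fone <-> c j = 1.
Proof.
move=> cj; split=> [->//|c_j1]; apply: funext => i; apply/eqP.
apply: contraT => ci; have ij : i = j := cj i ci.
by move: ci; rewrite ij c_j1 eqxx.
Qed.

Lemma Acopy_supp c j i : Acopy j c -> (c i != 1) = (i == j) && (c j != 1).
Proof.
move=> cj; case: (eqVneq i j) => [->//|neq /=].
by apply/negbTE/negP => /cj /eqP; rewrite (negbTE neq).
Qed.

Lemma conj_iota_Acopy g c j : Acopy j c -> exists d,
  [/\ finsuppA d, iota d = g * iota c * g^-1 & supp_transport (eps g) c d].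
Proof.
move=> cj; have fc : finsuppA c by apply: (sub_finite_set cj); exact: finite_set1.
have [d dj iota_d] : [set iota d | d in Acopy (act (eps g) j)] (g * iota c * g^-1).
  by rewrite -conj_Acopy; exists c.
have fd : finsuppA d by apply: (sub_finite_set dj); exact: finite_set1.
have d_trivial : d (act (eps g) j) = 1 <-> c j = 1.
  rewrite -(Acopy_fone cj) -(Acopy_fone dj) -!iota_eq1 // iota_d.
  split; last by move=> ->; rewrite mulg1 mulgV.
  move=> /(congr1 (fun x => g^-1 * x * g)).
  by rewrite mulg1 mulVg !mulgA mulVg mul1g mulgVK.
exists d; split=> // i; rewrite (Acopy_supp _ dj) (Acopy_supp _ cj).
have -> : (act (eps g)^-1 i == j) = (i == act (eps g) j).
  by apply/eqP/eqP => [<-|->]; rewrite ?actKV ?actK.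
by congr (_ && ~~ _); apply/eqP/eqP => /d_trivial.
Qed.

Lemma conj_iota g c : finsuppA c -> exists d,
  [/\ finsuppA d, iota d = g * iota c * g^-1 & supp_transport (eps g) c d].
Proof.
move=> fc; have [s] : exists s : seq I, suppA c `<=` [set` s].
  by exists (fset_set (suppA c)) => i ci /=; rewrite in_fset_set //; apply/mem_set.
elim: s c {fc} => [|j s IHs] c sub_s.
  have -> : c = fone.
    by apply: funext => i; apply/eqP; apply: contraT => /sub_s.
  exists fone; split; first exact: finsuppA_fone.
    by rewrite iota_fone mulg1 mulgV.
  by move=> i; rewrite /fone eqxx.
pose c_off := fun i => if i == j then 1 else c i.
pose c_at := fun i => if i == j then c j else 1.
have c_split : c = fmulA c_off c_at.
  apply: funext => i; rewrite /fmulA /c_off /c_at.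
  by case: (eqVneq i j) => [->|_]; rewrite ?mul1g ?mulg1.
have c_off_s : suppA c_off `<=` [set` s].
  move=> i; rewrite /suppA /c_off /=.
  case: (eqVneq i j) => [_|neq ci]; first by rewrite eqxx.
  by move: (sub_s i ci); rewrite /= in_cons (negbTE neq).
have c_at_j : Acopy j c_at.
  by move=> i; rewrite /suppA /c_at /=; case: (eqVneq i j) => [-> //|_]; rewrite eqxx.
have fc_off : finsuppA c_off by apply: (sub_finite_set c_off_s); exact: finite_seq.
have fc_at : finsuppA c_at by apply: (sub_finite_set c_at_j); exact: finite_set1.
have [d1 [fd1 iota_d1 t1]] := IHs _ c_off_s.
have [d2 [fd2 iota_d2 t2]] := conj_iota_Acopy g c_at_j.
exists (fmulA d1 d2); split; first exact: finsuppA_fmul.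
  by rewrite iota_fmul // iota_d1 iota_d2 c_split iota_fmul // !mulgA mulgVK.
rewrite c_split; apply: supp_transport_fmul t1 t2 => i.
by rewrite /c_off /c_at; case: (eqVneq i j); [left | right].
Qed.

(* Outside the kernel of [eps], [coords] takes the junk value [fone]. *)
Definition coords g : I -> A :=
  if pselect (exists c, finsuppA c /\ iota c = g) is left h then projT1 (cid h)
  else fone.

Lemma finsuppA_coords g : finsuppA (coords g).
Proof.
rewrite /coords; case: pselect => [h|_]; last exact: finsuppA_fone.
by case: (cid h) => ? [].
Qed.

Lemma coordsK g : eps g = 1 -> iota (coords g) = g.
Proof.
move=> /eps_eq1 h; rewrite /coords; case: pselect => [h'|//].
by case: (cid h') => ? [].
Qed.

Lemma coords_iota c : finsuppA c -> coords (iota c) = c.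
Proof.
move=> fc; have ker_c : eps (iota c) = 1 by apply/eps_eq1; exists c.
by apply: iota_inj (finsuppA_coords _) fc _; rewrite coordsK.
Qed.

Lemma epsJ g t : eps g = 1 -> eps (t * g * t^-1) = 1.
Proof. by rewrite !epsM epsV => ->; rewrite mulg1 mulgV. Qed.

Lemma coordsM g h : eps g = 1 -> eps h = 1 ->
  coords (g * h) = fmulA (coords g) (coords h).
Proof.
move=> /coordsK {1}<- /coordsK {1}<-; have fg := finsuppA_coords g.
have fh := finsuppA_coords h.
by rewrite -iota_fmul // coords_iota //; exact: finsuppA_fmul.
Qed.

Lemma coordsV g : eps g = 1 -> coords g^-1 = finv (coords g).
Proof.
move=> /coordsK {1}<-; have fg := finsuppA_coords g.
by rewrite -iota_finv // coords_iota //; exact: finsuppA_finv.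
Qed.

Lemma coordsJ g t : eps g = 1 ->
  supp_transport (eps t) (coords g) (coords (t * g * t^-1)).
Proof.
move=> /coordsK iota_g; have [d [fd iota_d t_d]] := conj_iota t (finsuppA_coords g).
by rewrite -{2}iota_g -iota_d coords_iota.
Qed.

Lemma card_supp_coordsM g h : eps g = 1 -> eps h = 1 ->
  (card_supp (coords (g * h)) <= card_supp (coords g) + card_supp (coords h))%N.
Proof. by move=> kg kh; rewrite coordsM //; apply: card_supp_fmul; exact: finsuppA_coords. Qed.

Lemma card_supp_coordsV g : eps g = 1 -> card_supp (coords g^-1) = card_supp (coords g).
Proof. by move=> kg; rewrite coordsV // card_supp_finv. Qed.

Lemma card_supp_coordsJ g t : eps g = 1 ->
  card_supp (coords (t * g * t^-1)) = card_supp (coords g).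
Proof. by move=> kg; apply: card_supp_transport (finsuppA_coords g) (coordsJ _ kg). Qed.

Lemma coords_mulJ_outside a g k t i : eps a = 1 -> eps g = 1 -> eps k = 1 ->
  coords a i = 1 -> coords k i = 1 ->
  (coords (a * (t * g * t^-1) * k) i != 1) = (coords g (act (eps t)^-1 i) != 1).
Proof.
move=> ka kg kk a_i k_i; have kgt : eps (t * g * t^-1) = 1 by exact: epsJ.
have kagt : eps (a * (t * g * t^-1)) = 1 by rewrite epsM ka kgt mulg1.
rewrite coordsM // coordsM // /fmulA a_i k_i mul1g mulg1.
exact: coordsJ.
Qed.

Section QuasiCocycle.
Variables (R : realType) (sigma : B -> G) (C : R).
Local Open Scope ring_scope.
Hypothesis sigmaK : forall b, eps (sigma b) = b.
Hypothesis cocycle_small : forall x y : B, exists c : I -> A,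
  [/\ finsuppA c, iota c = cocycle sigma x y & (card_supp c)%:R <= C].

Definition small_ker (r : R) (g : G) := eps g = 1%g /\ (card_supp (coords g))%:R <= r.

Lemma small_kerM r r' g h : small_ker r g -> small_ker r' h -> small_ker (r + r') (g * h)%g.
Proof.
move=> [kg cg] [kh ch]; split; first by rewrite epsM kg kh mulg1.
apply: le_trans (lerD cg ch); rewrite -natrD ler_nat.
exact: card_supp_coordsM.
Qed.

Lemma small_kerJ r g t : small_ker r g -> small_ker r (t * g * t^-1)%g.
Proof. by move=> [kg cg]; split; [exact: epsJ | rewrite card_supp_coordsJ]. Qed.

Lemma small_kerV r g : small_ker r g -> small_ker r g^-1%g.
Proof. by move=> [kg cg]; split; [rewrite epsV kg invg1 | rewrite card_supp_coordsV]. Qed.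

Lemma small_ker_cocycle a b : small_ker C (cocycle sigma a b).
Proof.
have [c [fc <- cC]] := cocycle_small a b; rewrite /small_ker coords_iota //.
by split=> //; apply/eps_eq1; exists c.
Qed.

(* Correcting [g] by the section lands in the kernel; the factor [sigma 1]
   makes the correction trivial on the kernel itself. *)
Definition ker_part (g : G) : G := (g * (sigma (eps g))^-1 * sigma 1)%g.

Lemma eps_ker_part g : eps (ker_part g) = 1%g.
Proof. by rewrite /ker_part !epsM epsV !sigmaK mulgV mul1g. Qed.

Lemma ker_part_iota c : finsuppA c -> ker_part (iota c) = iota c.
Proof.
move=> fc; rewrite /ker_part; have -> : eps (iota c) = 1%g by apply/eps_eq1; exists c.
by rewrite mulgVK.
Qed.

Lemma ker_partM3 x z y :
  let u := eps x in let v := eps z in let w := eps y in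
  let s := sigma 1 in
  let h := (s^-1 * sigma u)%g in
  let t := (h * s^-1 * sigma v)%g in
  let m := (s^-1 * (sigma u * s^-1 * (sigma u)^-1)
           * (sigma u * sigma v * s^-1 * (sigma u * sigma v)^-1)
           * (cocycle sigma u v * cocycle sigma (u * v) w) * s)%g in
  ker_part (x * z * y)
  = (ker_part x * (h * ker_part z * h^-1) * (t * ker_part y * t^-1 * m))%g.
Proof.
move=> u v w s h t m.
rewrite /m /t /h /ker_part /cocycle /u /v /w !epsM !invgM !invgK !mulgA.
by rewrite !(mulgK, mulgVK).
Qed.

Lemma ker_partM3_small x y : exists K : R, forall z, exists h k,
  [/\ eps h = eps x, small_ker K k &
      ker_part (x * z * y) = (ker_part x * (h * ker_part z * h^-1) * k)%g].
Proof.
pose s := sigma 1; have ker_s : eps s = 1%g by rewrite sigmaK.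
pose n_s : R := (card_supp (coords s))%:R.
exists ((card_supp (coords (ker_part y)))%:R + (n_s + n_s + n_s + (C + C) + n_s)) => z.
do 2 eexists; split; last exact: ker_partM3.
  by rewrite epsM epsV ker_s invg1 mul1g sigmaK.
have s_small : small_ker n_s s by [].
apply: small_kerM; first by apply: small_kerJ; split=> //; exact: eps_ker_part.
apply: small_kerM; last exact: s_small.
apply: small_kerM; last by apply: small_kerM; exact: small_ker_cocycle.
apply: small_kerM; last exact/small_kerJ/small_kerV.
by apply: small_kerM; [exact: small_kerV | exact/small_kerJ/small_kerV].
Qed.

Definition supp_indicator (c : I -> A) : I -> R := fun i => (c i != 1%g)%:R.

Definition quasi_cocycle (g : G) : I -> R := supp_indicator (coords (ker_part g)).

Lemma supp_indicatorE c : supp_indicator c = fun i => (i \in suppA c)%:R.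
Proof. by apply: funext => i; rewrite /supp_indicator memsuppA. Qed.

Lemma in_l2_quasi_cocycle g : in_l2 (quasi_cocycle g).
Proof.
rewrite /quasi_cocycle supp_indicatorE.
by case: (@l2_indicator R I _ (finsuppA_coords (ker_part g))).
Qed.

Lemma l2norm_quasi_cocycle_iota c : finsuppA c ->
  l2norm (quasi_cocycle (iota c)) ^+ 2 = (card_supp c)%:R.
Proof.
move=> fc; rewrite /quasi_cocycle ker_part_iota // coords_iota // supp_indicatorE.
by case: (@l2_indicator R I _ fc).
Qed.

Lemma quasi_cocycle_defect x y : exists M : R, forall z,
  l2norm (quasi_cocycle (x * z * y)%g - perm_rep act (eps x) (quasi_cocycle z)) <= M.
Proof.
have [K smallK] := ker_partM3_small x y.
exists (Num.sqrt ((card_supp (coords (ker_part x)))%:R + K)) => z.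
have [h [k [eps_h [ker_k card_k] E]]] := smallK z.
have -> : quasi_cocycle (x * z * y)%g - perm_rep act (eps x) (quasi_cocycle z) =
    fun i => (coords (ker_part (x * z * y)) i != 1%g)%:R
             - (coords (ker_part z) (act (eps x)^-1%g i) != 1%g)%:R.
  by apply: funext.
rewrite E.
pose D := suppA (coords (ker_part x)) `|` suppA (coords k).
have finD : finite_set D by rewrite finite_setU; split; exact: finsuppA_coords.
apply: le_trans (@l2norm_sub_indicator R I _ _ D finD _) _.
  move=> i /not_orP[]; rewrite /suppA /= => /negP/negbNE/eqP x_i /negP/negbNE/eqP k_i.
  by rewrite -eps_h; apply: coords_mulJ_outside => //; exact: eps_ker_part.
rewrite ler_sqrt ?addr_ge0 ?(le_trans _ card_k) //.
apply: le_trans (lerD (lexx _) card_k); rewrite -natrD ler_nat.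
by rewrite fset_setU ?(leq_card_fsetU _ _).1 //; exact: finsuppA_coords.
Qed.

End QuasiCocycle.

End KernelCoordinates.

Theorem theorem5p1 (R : realType) (A B G : groupType) (I : choiceType)
    (act : B -> I -> I) (eps : G -> B) (iota : (I -> A) -> G)
    (sigma : B -> G) (C : R) :
  is_WR act eps iota ->
  (forall b, eps (sigma b) = b) ->
  0 < C ->
  (forall x y : B, exists c : I -> A,
      [/\ finsuppA c, iota c = cocycle sigma x y & (card_supp c)%:R <= C]) ->
  exists q : G -> (I -> R),
    [/\ (forall g, in_l2 (q g)),
        (forall x y : G, exists M : R, forall z : G,
            l2norm (q (x * z * y)%g - perm_rep act (eps x) (q z)) <= M) &
        (forall c : I -> A, finsuppA c ->
            l2norm (q (iota c)) ^+ 2 = (card_supp c)%:R)].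
Proof.
move=> WR sigmaK _ cocycle_small.
exists (quasi_cocycle eps iota R sigma); split.
- exact: in_l2_quasi_cocycle.
- exact: (quasi_cocycle_defect WR sigmaK cocycle_small).
- exact: (l2norm_quasi_cocycle_iota WR R sigma).
Qed.
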